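(* Suppose $X$ is a large scale space that is large scale chain-connected via a uniformly bounded cover $\mathcal U$, and suppose that for every bounded subset $B$ of $X$ the union of all bounded $\mathcal U$-components of $X\setminus B$ is bounded and $X\setminus B$ has only finitely many unbounded $\mathcal U$-components. Suppose there is an increasing sequence $\{B_i\}_{i\ge1}$ of bounded subsets of $X$ such that every bounded subset of $X$ is contained in some $B_i$. Then the coarse ends of $X$ are in one-to-one correspondence with the Freudenthal ends of $X$ with respect to $\{B_i\}$, in the following sense: for every Freudenthal end $\{C_i\}_{i\ge1}$ there is exactly one end $E$ of $X$ with $C_i\in E$ for all $i$, and every end $E$ of $X$ contains all members of some (necessarily unique) Freudenthal end.
   Context: A large scale space is a set $X$ with a family $\mathbb{LSS}$ of covers (uniformly bounded covers) such that $st(\mathcal U,\mathcal V)\in\mathbb{LSS}$ whenever $\mathcal U,\mathcal V\in\mathbb{LSS}$, and any cover each of whose elements lies in some element of a member of $\mathbb{LSS}$ is in $\mathbb{LSS}$; here $st(x,\mathcal U)$ is the union of elements of $\mathcal U$ containing $x$, $st(A,\mathcal U)=\bigcup_{x\in A}st(x,\mathcal U)$, $st(\mathcal U,\mathcal V)=\{st(A,\mathcal V):A\in\mathcal U\}$. Bounded sets are subsets of elements of uniformly bounded covers; the union of two bounded sets is assumed bounded. $A$ is coarsely clopen if $st(A,\mathcal U)\cap st(X\setminus A,\mathcal U)$ is bounded for every uniformly bounded $\mathcal U$. A (coarse) end of $X$ is a family of unbounded coarsely clopen subsets maximal with respect to all finite intersections being unbounded. Given a cover $\mathcal U$, a $\mathcal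 U$-chain is a finite sequence $x_1,\dots,x_n$ such that for each $i<n$ some element of $\mathcal U$ contains $x_i$ and $x_{i+1}$; a set $W$ is $\mathcal U$-connected if any two of its points are joined by a $\mathcal U$-chain in $W$; the $\mathcal U$-components of $A\subseteq X$ are the equivalence classes of points of $A$ under joinability by $\mathcal U$-chains in $A$. $X$ is large scale chain-connected via $\mathcal U$ if $\mathcal U$ is uniformly bounded and every uniformly bounded cover $\mathcal V$ refines a uniformly bounded cover $\mathcal W$ consisting of $\mathcal U$-connected sets. A Freudenthal end of $X$ with respect to $\{B_i\}$ is a decreasing sequence $\{C_i\}_{i\ge1}$ where each $C_i$ is a non-empty $\mathcal U$-component of $X\setminus B_i$. *)

From mathcomp Require Import all_boot.
From mathcomp Require Export boolp classical_sets functions cardinality.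
Set Implicit Arguments.
Unset Strict Implicit.
Unset Printing Implicit Defensive.
Local Open Scope classical_set_scope.

Section LargeScale.
Variable X : Type.

Definition is_cover (U : set (set X)) : Prop := forall x, exists A, U A /\ A x.

Definition st_pt (x : X) (U : set (set X)) : set X :=
  [set y | exists A, U A /\ A x /\ A y].
Definition st_set (A : set X) (U : set (set X)) : set X :=
  [set y | exists x, A x /\ st_pt x U y].
Definition st_cov (U V : set (set X)) : set (set X) :=
  [set S | exists A, U A /\ S = st_set A V].

Definition refines (U V : set (set X)) : Prop :=
  forall A, U A -> exists B, V B /\ A `<=` B.

(* A large scale structure: a family of (uniformly bounded) covers *)
Record is_lss (L : set (set (set X))) : Prop := {
  lss_cover : forall U, L U -> is_cover U;
  lss_star : forall U V, L U -> L V -> L (st_cov U V);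
  lss_refine : forall U V, L V -> is_cover U -> refines U V -> L U }.

Definition bounded (L : set (set (set X))) (B : set X) : Prop :=
  exists U, L U /\ exists A, U A /\ B `<=` A.

Definition coarsely_clopen (L : set (set (set X))) (A : set X) : Prop :=
  forall U, L U -> bounded L (st_set A U `&` st_set (~` A) U).

Definition good_family (L : set (set (set X))) (E : set (set X)) : Prop :=
  (forall A, E A -> ~ bounded L A /\ coarsely_clopen L A) /\
  (forall (n : nat) (A : nat -> set X), (forall i, (i < n)%N -> E (A i)) ->
     ~ bounded L (\bigcap_(i in `I_n) A i)).

Definition is_end (L : set (set (set X))) (E : set (set X)) : Prop :=
  good_family L E /\ (forall F, good_family L F -> E `<=` F -> F = E).

Inductive uchain (U : set (set X)) (A : set X) (x : X) : X -> Prop :=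
| uchain_refl : A x -> uchain U A x x
| uchain_step : forall y z, uchain U A x y -> A z ->
    (exists V, U V /\ V y /\ V z) -> uchain U A x z.

Definition u_connected (U : set (set X)) (W : set X) : Prop :=
  forall x y, W x -> W y -> uchain U W x y.

Definition is_component (U : set (set X)) (A C : set X) : Prop :=
  exists x, A x /\ C = [set y | uchain U A x y].

Definition ls_chain_connected (L : set (set (set X))) (U : set (set X)) : Prop :=
  L U /\ forall V, L V -> exists W, L W /\ (forall A, W A -> u_connected U A)
                                  /\ refines V W.

(* Freudenthal end w.r.t. B (indices start at 0 instead of 1) *)
Definition freudenthal_end (U : set (set X)) (B : nat -> set X) (C : nat -> set X) : Prop :=
  (forall i, C i.+1 `<=` C i) /\
  (forall i, C i !=set0 /\ is_component U (~` B i) (C i)).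

End LargeScale.

From mathcomp Require Import all_boot.
From mathcomp Require Import boolp classical_sets functions cardinality.
Local Open Scope classical_set_scope.
Set Implicit Arguments.
Unset Strict Implicit.

(* A set
   A is "cut off" by E when some finite intersection of members of E meets A
   in a bounded set; maximality of an end says exactly that a coarsely clopen
   set not in E is cut off by E.  Two facts about U-components drive the proof:
   a U-component of the complement of a bounded set is coarsely clopen, and a
   coarsely clopen set A does not split any U-component of the complement of a
   set containing st(A,U) ∩ st(X\A,U).
   - From a Freudenthal end (C_i) we build the family of coarsely clopen sets
     containing some C_i; it is good, and it contains every good family
     containing all C_i, hence it is the unique end containing all C_i.
   - From an end E, the finiteness assumption on components shows that the
     complement of each B_i has a component C_i in E; two such components must
     coincide since members of E meet, which makes (C_i) decreasing and unique. *)

Section Chains.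
Variables (X : Type) (U : set (set X)).

Lemma uchain_in (A : set X) x y : uchain U A x y -> A x /\ A y.
Proof. by elim=> [//|y' z _ [Ax _] Az _]. Qed.

Lemma uchain_trans (A : set X) x y z :
  uchain U A x y -> uchain U A y z -> uchain U A x z.
Proof. by move=> Hxy; elim=> [//|y' z' _ IH Az Hv]; apply: uchain_step IH Az Hv. Qed.

Lemma uchain_sym (A : set X) x y : uchain U A x y -> uchain U A y x.
Proof.
elim=> [Ax|y' z Hxy IH Az [V [UV [Vy Vz]]]]; first exact: uchain_refl.
apply: uchain_trans IH.
apply: (uchain_step (y := z)); first exact: uchain_refl.
  by case: (uchain_in Hxy).
by exists V.
Qed.

Lemma uchain_mono (A A' : set X) x y :
  A `<=` A' -> uchain U A x y -> uchain U A' x y.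
Proof.
move=> AA'; elim=> [Ax|y' z _ IH Az Hv]; first exact/uchain_refl/AA'.
exact: uchain_step IH (AA' _ Az) Hv.
Qed.

Lemma component_sub (A C : set X) : is_component U A C -> C `<=` A.
Proof. by move=> [x [Ax ->]] y /= Hy; case: (uchain_in Hy). Qed.

Lemma component_of (A C : set X) x :
  is_component U A C -> C x -> C = [set y | uchain U A x y].
Proof.
move=> [x0 [Ax0 ->]] /= Hx; apply/seteqP; split=> y /= Hy.
  exact: uchain_trans (uchain_sym Hx) Hy.
exact: uchain_trans Hx Hy.
Qed.

Lemma component_eq (A C C' : set X) x :
  is_component U A C -> is_component U A C' -> C x -> C' x -> C = C'.
Proof. by move=> HC HC' Cx C'x; rewrite (component_of HC Cx) (component_of HC' C'x). Qed.

Lemma component_shrink (K K' C : set X) x : K `<=` K' ->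
  is_component U (~` K') C -> C x -> C `<=` [set y | uchain U (~` K) x y].
Proof.
move=> KK' HC Cx y; rewrite (component_of HC Cx) /=; apply: uchain_mono.
by move=> z nK'z Kz; apply/nK'z/KK'.
Qed.

Lemma clopen_component_split (A K : set X) :
  st_set A U `&` st_set (~` A) U `<=` K ->
  forall C, is_component U (~` K) C -> C `<=` A \/ C `<=` ~` A.
Proof.
move=> dAK C [x [nKx ->]].
have same_side y : uchain U (~` K) x y -> (A x <-> A y).
  elim=> [_ //|y' z _ IH nKz [V [UV [Vy Vz]]]]; rewrite IH.
  split=> [Ay|Az]; apply: contrapT => nA; apply/nKz/dAK; split.
  - by exists y'; split=> //; exists V.
  - by exists z; split=> //; exists V.
  - by exists z; split=> //; exists V.
  - by exists y'; split=> //; exists V.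
have [Ax|nAx] := pselect (A x); [left|right] => y /= /same_side; first by move=> <-.
by move=> <-.
Qed.

End Chains.

Section FiniteMeets.
Variables (X : Type) (E : set (set X)).

Inductive finite_meet : set X -> Prop :=
| meet_setT : finite_meet setT
| meet_setI S A : finite_meet S -> E A -> finite_meet (S `&` A).

Lemma finite_meetI S T : finite_meet S -> finite_meet T -> finite_meet (S `&` T).
Proof.
move=> FS; elim=> [|T' A _ IH EA]; first by rewrite setIT.
by rewrite setIA; apply: meet_setI.
Qed.

Lemma finite_meet_indexed S : finite_meet S ->
  exists n (A : nat -> set X), (forall i, (i < n)%N -> E (A i)) /\
    \bigcap_(i in `I_n) A i `<=` S.
Proof.
elim=> [|S' A _ [n [F [EF sub]]] EA]; first by exists 0%N, (fun _ => setT).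
exists n.+1, (fun i => if i == n then A else F i); split.
  move=> i; case: eqP => [//|ne] lt; apply: EF.
  by rewrite ltnS leq_eqVlt in lt; case/orP: lt => // /eqP.
move=> x Hx; split; last by have := Hx n; rewrite eqxx; apply => /=.
apply: sub => i /= lt; have := Hx i; rewrite /= (ltn_eqF lt); apply.
by rewrite /= ltnS ltnW.
Qed.

Lemma indexed_finite_meet n (A : nat -> set X) :
  (forall i, (i < n)%N -> E (A i)) ->
  exists2 S, finite_meet S & S `<=` \bigcap_(i in `I_n) A i.
Proof.
elim: n => [|n IH] EA; first by exists setT; [exact: meet_setT|].
have [S FS sub] : exists2 S, finite_meet S & S `<=` \bigcap_(i in `I_n) A i.
  by apply: IH => i lt; apply: EA; rewrite ltnW.
exists (S `&` A n); first by apply: meet_setI => //; apply: EA.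
move=> x [Sx Ax] i /=; rewrite ltnS leq_eqVlt => /orP [/eqP -> //|lt].
exact: (sub x Sx i lt).
Qed.

End FiniteMeets.

Lemma finite_meet_setU1 X (E : set (set X)) (A S : set X) :
  finite_meet (E `|` [set A]) S -> exists2 S', finite_meet E S' & S' `&` A `<=` S.
Proof.
elim=> [|S1 A1 _ [S' FS' sub] [EA1|->]].
- by exists setT; [exact: meet_setT|].
- exists (S' `&` A1); first exact: meet_setI.
  by move=> x [[S'x A1x] Ax]; split=> //; apply: sub.
- by exists S' => // x [S'x Ax]; split=> //; apply: sub.
Qed.

Lemma finite_set_enum T (t0 : T) (A : set T) : finite_set A ->
  exists n (f : nat -> T), A = f @` `I_n.
Proof.
move=> [n An].
have : (A #<= `I_n)%card by move: An; rewrite card_eq_le => /andP[].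
case/pfcard_geP => [->|]; first by exists 0%N, (fun _ => t0); rewrite II0 image_set0.
by move/surjfunPex => [f ->]; exists n, f.
Qed.

Section Bounded.
Variables (X : Type) (L : set (set (set X))).

Lemma bounded_sub (A B : set X) : bounded L A -> B `<=` A -> bounded L B.
Proof.
move=> [V [LV [W [VW AW]]]] BA; exists V; split=> //; exists W; split=> //.
exact: subset_trans BA AW.
Qed.

Lemma unbounded_nonempty (A : set X) :
  bounded L set0 -> ~ bounded L A -> A !=set0.
Proof.
move=> b0 nbA; apply: contrapT => nA; apply/nbA/(bounded_sub b0) => x Ax.
by apply: nA; exists x.
Qed.

Lemma good_meet (E : set (set X)) S :
  good_family L E -> finite_meet E S -> ~ bounded L S.
Proof.
move=> [_ GE] /finite_meet_indexed [n [A [EA sub]]] bS.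
exact/(GE n A EA)/(bounded_sub bS sub).
Qed.

Lemma good_familyI (E : set (set X)) :
  (forall A, E A -> ~ bounded L A /\ coarsely_clopen L A) ->
  (forall S, finite_meet E S -> ~ bounded L S) -> good_family L E.
Proof.
move=> EA ES; split=> // n A HA bA.
have [S FS sub] := indexed_finite_meet HA.
exact/(ES S FS)/(bounded_sub bA sub).
Qed.

Lemma st_mono (A A' : set X) V : A `<=` A' -> st_set A V `<=` st_set A' V.
Proof. by move=> AA' y [x [Ax H]]; exists x; split=> //; apply: AA'. Qed.

Lemma st_bounded (V : set (set X)) (B : set X) :
  is_lss L -> L V -> bounded L B -> bounded L (st_set B V).
Proof.
move=> HL LV [M [LM [A0 [MA0 BA0]]]].
exists (st_cov M V); split; first exact: lss_star.
by exists (st_set A0 V); split; [exists A0|apply: st_mono].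
Qed.

(* Components of the complement of a bounded set are coarsely clopen: a point
   near both C and its complement is, by chain-connectedness, near B. *)
Lemma component_clopen (U : set (set X)) (B C : set X) :
  is_lss L -> ls_chain_connected L U -> bounded L B ->
  is_component U (~` B) C -> coarsely_clopen L C.
Proof.
move=> HL Hcc bB HC V LV; have [W [LW [Wcon Vref]]] := Hcc.2 V LV.
apply: bounded_sub (st_bounded HL LW bB) _.
move=> y [[c [Cc [V1 [VV1 [V1c V1y]]]]] [d [nCd [V2 [VV2 [V2d V2y]]]]]].
have [W1 [WW1 V1W1]] := Vref V1 VV1.
have [W2 [WW2 V2W2]] := Vref V2 VV2.
apply: contrapT => nst.
have missB Wi : W Wi -> Wi y -> Wi `<=` ~` B.
  by move=> WWi Wiy z Wiz Bz; apply: nst; exists z; split=> //; exists Wi.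
have cy := uchain_mono (missB _ WW1 (V1W1 y V1y))
  (Wcon W1 WW1 c y (V1W1 c V1c) (V1W1 y V1y)).
have yd := uchain_mono (missB _ WW2 (V2W2 y V2y))
  (Wcon W2 WW2 y d (V2W2 y V2y) (V2W2 d V2d)).
by apply: nCd; rewrite (component_of HC Cc) /=; apply: uchain_trans cy yd.
Qed.

End Bounded.

Section Ends.
Variables (X : Type) (L : set (set (set X))).
Hypothesis bounded_setU :
  forall A B, bounded L A -> bounded L B -> bounded L (A `|` B).
Hypothesis bounded_set0 : bounded L set0.

Definition cut_off (E : set (set X)) (A : set X) : Prop :=
  exists2 S, finite_meet E S & bounded L (S `&` A).

Lemma cut_off_bounded E A : bounded L A -> cut_off E A.
Proof. by move=> bA; exists setT; [exact: meet_setT|rewrite setTI]. Qed.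

Lemma cut_off_sub E A A' : A' `<=` A -> cut_off E A -> cut_off E A'.
Proof.
move=> A'A [S FS bS]; exists S => //; apply: bounded_sub bS _.
by move=> x [Sx A'x]; split=> //; apply: A'A.
Qed.

Lemma cut_off_setU E A A' : cut_off E A -> cut_off E A' -> cut_off E (A `|` A').
Proof.
move=> [S FS bS] [S' FS' bS']; exists (S `&` S'); first exact: finite_meetI.
apply: bounded_sub (bounded_setU bS bS') _.
by move=> x [[Sx S'x] [Ax|A'x]]; [left|right].
Qed.

Lemma cut_off_bigcup E (F : set (set X)) : finite_set F ->
  (forall A, F A -> cut_off E A) -> cut_off E (\bigcup_(A in F) A).
Proof.
move=> /(finite_set_enum set0) [n [f ->]]; rewrite bigcup_image.
elim: n => [|n IH] cutF; first by rewrite II0 bigcup_set0; exact: cut_off_bounded.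
rewrite IISl bigcup_setU1; apply: cut_off_setU; first by apply: cutF; exists n => /=.
by apply: IH => A [k kn <-]; apply: cutF; exists k => //=; exact: ltnW.
Qed.

Lemma good_not_cut_setT E : good_family L E -> ~ cut_off E setT.
Proof. by move=> GE [S FS]; rewrite setIT; apply: good_meet GE FS. Qed.

Section AnEnd.
Variable E : set (set X).
Hypothesis endE : is_end L E.

Let goodE : good_family L E := endE.1.

(* Maximality: a coarsely clopen set outside E is cut off by E, for otherwise
   adding it to E would give a strictly larger good family. *)
Lemma end_cut_off A : coarsely_clopen L A -> ~ E A -> cut_off E A.
Proof.
move=> ccA nEA; apply: contrapT => ncut.
have goodEA : good_family L (E `|` [set A]).
  apply: good_familyI => [A' [EA'|->]|S /finite_meet_setU1 [S' FS' sub] bS].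
  - exact: goodE.1.
  - by split=> // bA; apply/ncut/cut_off_bounded.
  - by apply: ncut; exists S' => //; apply: bounded_sub bS sub.
have EAE : E `|` [set A] = E by apply: endE.2 => // x Ex; left.
by apply: nEA; rewrite -EAE; right.
Qed.

Lemma end_upward A A' : E A -> A `<=` A' -> coarsely_clopen L A' -> E A'.
Proof.
move=> EA AA' ccA'; apply: contrapT => /(end_cut_off ccA') [S FS bS].
apply: (good_meet goodE (meet_setI FS EA)); apply: bounded_sub bS _.
by move=> x [Sx Ax]; split=> //; apply: AA'.
Qed.

(* Members of an end meet, so an end contains at most one component of a set. *)
Lemma end_component_unique (U : set (set X)) (K C C' : set X) :
  is_component U K C -> is_component U K C' -> E C -> E C' -> C = C'.
Proof.
move=> HC HC' EC EC'.
have FCC' : finite_meet E (setT `&` C `&` C') by do 2 apply: meet_setI => //; exact: meet_setT.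
have [x [[_ Cx] C'x]] := unbounded_nonempty bounded_set0 (good_meet goodE FCC').
exact: component_eq HC HC' Cx C'x.
Qed.

(* If the bounded components of the complement of a bounded set K have bounded
   union and only finitely many of its components are unbounded, then one of its components lies in E:
   otherwise X itself would be cut off by E. *)
Lemma end_component (U : set (set X)) (K : set X) :
  is_lss L -> ls_chain_connected L U -> bounded L K ->
  bounded L (\bigcup_(C in [set C | is_component U (~` K) C /\ bounded L C]) C) ->
  finite_set [set C | is_component U (~` K) C /\ ~ bounded L C] ->
  exists C, is_component U (~` K) C /\ E C.
Proof.
move=> HL Hcc bK bD finC; apply: contrapT => nex.
have cut_unbounded : cut_off E
    (\bigcup_(C in [set C | is_component U (~` K) C /\ ~ bounded L C]) C).
  apply: cut_off_bigcup finC _ => C [HC _].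
  apply: end_cut_off; first exact: component_clopen HL Hcc bK HC.
  by move=> EC; apply: nex; exists C.
apply: (good_not_cut_setT goodE).
apply: (cut_off_sub _ (cut_off_setU (cut_off_setU (cut_off_bounded _ bK)
  (cut_off_bounded _ bD)) cut_unbounded)) => x _.
have [Kx|nKx] := pselect (K x); first by left; left.
have HCx : is_component U (~` K) [set y | uchain U (~` K) x y] by exists x.
have Cxx : uchain U (~` K) x x by exact: uchain_refl.
by have [bCx|nbCx] := pselect (bounded L [set y | uchain U (~` K) x y]);
  [left; right|right]; exists [set y | uchain U (~` K) x y].
Qed.

End AnEnd.
End Ends.

Section Freudenthal.
Variables (X : Type) (L : set (set (set X))) (U : set (set X)) (B : nat -> set X).
Hypothesis HL : is_lss L.
Hypothesis bounded_setU :
  forall A B, bounded L A -> bounded L B -> bounded L (A `|` B).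
Hypothesis Hcc : ls_chain_connected L U.
Hypothesis components_finite : forall K, bounded L K ->
  bounded L (\bigcup_(C in [set C | is_component U (~` K) C /\ bounded L C]) C)
  /\ finite_set [set C | is_component U (~` K) C /\ ~ bounded L C].
Hypothesis B_bounded : forall i, bounded L (B i).
Hypothesis B_increasing : forall i, B i `<=` B i.+1.
Hypothesis B_cofinal : forall A, bounded L A -> exists i, A `<=` B i.

Let bounded_set0 : bounded L set0 := bounded_sub (B_bounded 0) (@sub0set _ _).

Lemma B_mono i k : (i <= k)%N -> B i `<=` B k.
Proof.
move=> ik; apply: (@homo_leq _ B (@subset X) _ _ B_increasing i k ik).
  exact: subset_refl.
by move=> A2 A1 A3; apply: subset_trans.
Qed.

Lemma freudenthal_mono C i k :
  freudenthal_end U B C -> (i <= k)%N -> C k `<=` C i.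
Proof.
move=> [Cdec _] ik.
apply: (@homo_leq _ C (fun A A' => A' `<=` A) _ _ Cdec i k ik).
  exact: subset_refl.
by move=> A2 A1 A3 A21 A32; apply: subset_trans A32 A21.
Qed.

(* The terms of a Freudenthal end escape every B_j, hence every bounded set. *)
Lemma freudenthal_unbounded C i : freudenthal_end U B C -> ~ bounded L (C i).
Proof.
move=> HF bCi; have [j Cij] := B_cofinal bCi.
have [[y Cy] HC] := HF.2 (maxn i j).
apply: (component_sub HC Cy); apply: (B_mono (leq_maxr i j)); apply: Cij.
exact: (freudenthal_mono HF (leq_maxl i j)).
Qed.

Lemma clopen_eventually_split A : coarsely_clopen L A ->
  exists j, forall k, (j <= k)%N -> forall C,
    is_component U (~` B k) C -> C `<=` A \/ C `<=` ~` A.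
Proof.
move=> ccA; have [j dAj] := B_cofinal (ccA U Hcc.1).
exists j => k jk; apply: clopen_component_split.
exact: subset_trans dAj (B_mono jk).
Qed.

Definition freudenthal_family (C : nat -> set X) : set (set X) :=
  [set A | coarsely_clopen L A /\ exists j, C j `<=` A].

Lemma freudenthal_family_terms C i :
  freudenthal_end U B C -> freudenthal_family C (C i).
Proof.
move=> HF; split; last by exists i.
exact: component_clopen HL Hcc (B_bounded i) (HF.2 i).2.
Qed.

Lemma freudenthal_family_good C :
  freudenthal_end U B C -> good_family L (freudenthal_family C).
Proof.
move=> HF.
have meet_term S : finite_meet (freudenthal_family C) S -> exists j, C j `<=` S.
  elim=> [|S' A _ [j1 CS'] [_ [j2 CA]]]; first by exists 0%N.
  exists (maxn j1 j2) => x Cx; split.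
    by apply/CS'/(freudenthal_mono HF (leq_maxl j1 j2)).
  by apply/CA/(freudenthal_mono HF (leq_maxr j1 j2)).
apply: good_familyI => [A [ccA [j CA]]|S /meet_term [j CS] bS].
  by split=> // bA; apply: (freudenthal_unbounded HF); apply: bounded_sub bA CA.
by apply: (freudenthal_unbounded HF); apply: bounded_sub bS CS.
Qed.

(* Any good family F containing all terms of C lies in the family generated by
   C: a member A of F is not split by the component C_j for j large, and A
   cannot avoid C_j since both belong to F. *)
Lemma freudenthal_family_max C F : freudenthal_end U B C ->
  good_family L F -> (forall i, F (C i)) -> F `<=` freudenthal_family C.
Proof.
move=> HF GF FC A FA; have ccA := (GF.1 A FA).2.
have [j splitA] := clopen_eventually_split ccA.
have [CA|CnA] := splitA j (leqnn j) (C j) (HF.2 j).2; first by split=> //; exists j.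
have FCA : finite_meet F (setT `&` C j `&` A) by do 2 apply: meet_setI => //; exact: meet_setT.
exfalso; apply: (good_meet GF FCA); apply: bounded_sub bounded_set0 _.
by move=> x [[_ Cx] Ax]; apply: CnA Cx Ax.
Qed.

Lemma freudenthal_end_unique C : freudenthal_end U B C ->
  exists! E, is_end L E /\ forall i, E (C i).
Proof.
move=> HF; have terms i := freudenthal_family_terms i HF.
exists (freudenthal_family C); split.
  split=> //; split; first exact: freudenthal_family_good.
  move=> F GF CF; apply/seteqP; split=> //.
  by apply: freudenthal_family_max => // i; apply: CF.
move=> E [[GE maxE] EC]; apply: maxE; first exact: freudenthal_family_good.
exact: freudenthal_family_max.
Qed.

(* Every coarse end contains the terms of exactly one Freudenthal end: its
   unique component of each X \ B_i. *)
Lemma end_freudenthal_unique E : is_end L E ->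
  exists! C, freudenthal_end U B C /\ forall i, E (C i).
Proof.
move=> endE.
have comp_in_E i : exists C, is_component U (~` B i) C /\ E C.
  have [bD finC] := components_finite (B_bounded i).
  exact: (end_component bounded_setU bounded_set0 endE HL Hcc (B_bounded i) bD finC).
have unique_in_E i (C1 C2 : set X) : is_component U (~` B i) C1 ->
    is_component U (~` B i) C2 -> E C1 -> E C2 -> C1 = C2.
  by move=> HC1 HC2; apply: (end_component_unique bounded_set0 endE HC1 HC2).
have nonempty A : E A -> A !=set0.
  by move=> EA; apply: unbounded_nonempty bounded_set0 (endE.1.1 A EA).1.
have [C HC] := choice comp_in_E.
exists C; split; last first.
  move=> C' [[_ HF'] EC']; apply: funext => i.
  exact: unique_in_E (HC i).1 (HF' i).2 (HC i).2 (EC' i).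
split; last by move=> i; case: (HC i).
split=> i; last by have [HCi ECi] := HC i; split=> //; apply: nonempty.
have [HCi1 ECi1] := HC i.+1; have [x Cx] := nonempty _ ECi1.
have nBx : (~` B i) x by move=> Bx; apply: (component_sub HCi1 Cx); apply: B_increasing.
have HCx : is_component U (~` B i) [set y | uchain U (~` B i) x y] by exists x.
have shrink := component_shrink (@B_increasing i) HCi1 Cx.
have ECx := end_upward endE ECi1 shrink (component_clopen HL Hcc (B_bounded i) HCx).
by rewrite (unique_in_E i _ _ (HC i).1 HCx (HC i).2 ECx).
Qed.

End Freudenthal.

Theorem theorem3p4 (X : Type) (L : set (set (set X))) (HL : is_lss L)
  (Hunion : forall A B, bounded L A -> bounded L B -> bounded L (A `|` B))
  (U : set (set X)) (Hcc : ls_chain_connected L U)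
  (Hcomp : forall B, bounded L B ->
     bounded L (\bigcup_(C in [set C | is_component U (~` B) C /\ bounded L C]) C)
     /\ finite_set [set C | is_component U (~` B) C /\ ~ bounded L C])
  (B : nat -> set X)
  (HBb : forall i, bounded L (B i))
  (HBinc : forall i, B i `<=` B i.+1)
  (HBcof : forall A, bounded L A -> exists i, A `<=` B i) :
  (forall C, freudenthal_end U B C ->
     exists! E, is_end L E /\ forall i, E (C i)) /\
  (forall E, is_end L E ->
     exists! C, freudenthal_end U B C /\ forall i, E (C i)).
Proof.
split=> [C HC | E endE].
- exact: (freudenthal_end_unique HL Hcc HBb HBinc HBcof HC).
- exact: (end_freudenthal_unique HL Hunion Hcc Hcomp HBb HBinc endE).
Qed.
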